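(* Let $m\ge 4$ and $n\ge 5$ be integers with $n$ odd. On an $m\times n$ board with White king on $(m,1)$, White rook on $(1,1)$, Black king on $(m,n)$, and White to move, White can force checkmate within $n$ moves.
   Context: The board is the set of squares $(x,y)$ with $1\le x\le m$ (column) and $1\le y\le n$ (row). The pieces move and capture as in ordinary chess, restricted to this rectangular board: a king moves to any of the up to eight adjacent squares, and a rook moves any number of squares along its row or column without passing through another piece. The usual legality rules apply: a king may not move to a square attacked by an enemy piece, and the kings may never be adjacent. Black is checkmated if the Black king is attacked and Black has no legal move. ''White can force checkmate within $k$ moves'' means White has a strategy such that, against every sequence of legal Black replies, Black is checkmated by one of White's first $k$ moves; the players alternate, White first. *)

From Stdlib Require Import Arith Lia.

(* A square is (x, y): column x in 1..m, row y in 1..n. *)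
Definition square := (nat * nat)%type.

Definition on_board (m n : nat) (s : square) : Prop :=
  1 <= fst s <= m /\ 1 <= snd s <= n.

Definition adj (a b : square) : Prop :=
  a <> b /\
  fst a <= fst b + 1 /\ fst b <= fst a + 1 /\
  snd a <= snd b + 1 /\ snd b <= snd a + 1.

Definition strictly_between (a b c : nat) : Prop :=
  (a < b /\ b < c) \/ (c < b /\ b < a).

(* A rook on r attacks (or can slide to) square t, the only other piece that
   may obstruct the line being on square o (o is not strictly between r and t). *)
Definition rook_line (r t o : square) : Prop :=
  (fst r = fst t /\ snd r <> snd t /\
     ~ (fst o = fst r /\ strictly_between (snd r) (snd o) (snd t))) \/
  (snd r = snd t /\ fst r <> fst t /\
     ~ (snd o = snd r /\ strictly_between (fst r) (fst o) (fst t))).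

(* A position: White king, White rook (None once captured), Black king. *)
Record position := Pos { wk : square; wr : option square; bk : square }.

Definition black_in_check (p : position) : Prop :=
  exists r, wr p = Some r /\ rook_line r (bk p) (wk p).

Definition white_move (m n : nat) (p p' : position) : Prop :=
  (exists t, on_board m n t /\ adj (wk p) t /\ wr p <> Some t /\
     t <> bk p /\ ~ adj t (bk p) /\
     p' = Pos t (wr p) (bk p)) \/
  (exists r t, wr p = Some r /\ on_board m n t /\
     rook_line r t (wk p) /\ rook_line r t (bk p) /\
     t <> wk p /\ t <> bk p /\
     p' = Pos (wk p) (Some t) (bk p)).

(* The Black king moves to an
   adjacent square not adjacent to the White king and not attacked by the rook
   (Black's king having left its square, only the White king can block the
   rook); it may capture an unprotected rook. *)
Definition black_move (m n : nat) (p p' : position) : Prop :=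
  exists s, on_board m n s /\ adj (bk p) s /\ s <> wk p /\ ~ adj s (wk p) /\
    match wr p with
    | None => p' = Pos (wk p) None s
    | Some r =>
        (s = r /\ p' = Pos (wk p) None s) \/
        (s <> r /\ ~ rook_line r s (wk p) /\ p' = Pos (wk p) (Some r) s)
    end.

Definition checkmated (m n : nat) (p : position) : Prop :=
  black_in_check p /\ forall p', ~ black_move m n p p'.

(* White (to move in p) can force checkmate within k moves: White has a legal
   move that either checkmates, or leaves Black with at least one legal move
   (otherwise it is stalemate) and after every legal Black reply White can
   force checkmate within k-1 moves. *)
Fixpoint white_mates_within (m n k : nat) (p : position) : Prop :=
  match k with
  | 0 => False
  | S k' =>
      exists p', white_move m n p p' /\
        (checkmated m n p' \/
         ((exists p'', black_move m n p' p'') /\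
          forall p'', black_move m n p' p'' -> white_mates_within m n k' p''))
  end.

From Stdlib Require Import Arith Lia.

(* The rook moves to column m-1 and confines the Black king to column m.  The
   White king then walks up column m; Black has to stay two rows away and can
   only shuttle up and down, which preserves the parity of the gap between the
   kings.  That gap is odd because n is, so when the White king reaches row
   n-3 the Black king stands in the corner (m,n).  Then K(m-1,n-2) forces Black
   to (m-1,n), the rook's step to column m-2 drives the king back to (m,n), and
   the rook mates along the top row. *)

Lemma pair_neq_iff (a b c d : nat) : (a, b) <> (c, d) <-> a <> c \/ b <> d.
Proof.
  split.
  - intro H; destruct (Nat.eq_dec a c), (Nat.eq_dec b d); subst; tauto.
  - intros H E; injection E; lia.
Qed.

Lemma adj_pair_iff (a b c d : nat) :
  adj (a, b) (c, d) <->
  (a <> c \/ b <> d) /\ a <= c + 1 /\ c <= a + 1 /\ b <= d + 1 /\ d <= b + 1.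
Proof. unfold adj; cbn [fst snd]; rewrite pair_neq_iff; tauto. Qed.

Ltac board_arith :=
  cbn [wk wr bk fst snd] in *;
  unfold on_board, rook_line, strictly_between, black_in_check in *;
  cbn [wk wr bk fst snd] in *;
  repeat rewrite adj_pair_iff in *; repeat rewrite pair_neq_iff in *.

Lemma black_move_rook_inv m n k r b p :
  black_move m n (Pos k (Some r) b) p ->
  exists s, on_board m n s /\ adj b s /\ s <> k /\ ~ adj s k /\
    (s = r /\ p = Pos k None s \/
     s <> r /\ ~ rook_line r s k /\ p = Pos k (Some r) s).
Proof. intros [s Hs]; exists s; exact Hs. Qed.

Lemma white_mates_within_step m n k p p' :
  white_move m n p p' ->
  (exists q, black_move m n p' q) ->
  (forall q, black_move m n p' q -> white_mates_within m n k q) ->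
  white_mates_within m n (S k) p.
Proof. intros Hw Hb Hk; exists p'; auto. Qed.

Lemma white_mates_within_forced m n k p p' q :
  white_move m n p p' -> black_move m n p' q ->
  (forall q', black_move m n p' q' -> q' = q) ->
  white_mates_within m n k q -> white_mates_within m n (S k) p.
Proof.
  intros Hw Hq Huniq Hk; apply white_mates_within_step with p'; eauto.
  intros q' Hq'; rewrite (Huniq q' Hq'); exact Hk.
Qed.

Section KingRookEndgame.

Variables m n : nat.
Hypothesis m_ge3 : 3 <= m.
Hypothesis n_ge4 : 4 <= n.

Definition fenced (w y : nat) : position := Pos (m, w) (Some (m - 1, 1)) (m, y).

Lemma black_move_fenced w y p :
  1 <= w -> w + 2 <= y -> black_move m n (fenced w y) p ->
  exists y', p = fenced w y' /\ w + 2 <= y' <= n /\ (y' = S y \/ S y' = y).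
Proof.
  intros Hw Hy Hp; apply black_move_rook_inv in Hp.
  destruct Hp as [[x y'] [Hon [Hadj [Hk [Hnadj Hcases]]]]]; board_arith.
  destruct Hcases as [[E _] | [_ [Hfree ->]]]; [injection E; lia |].
  assert (x = m) as -> by lia.
  exists y'; split; [reflexivity | lia].
Qed.

Lemma black_move_fenced_intro w y y' :
  w + 2 <= y' <= n -> y' = S y \/ S y' = y ->
  black_move m n (fenced w y) (fenced w y').
Proof.
  intros Hy' Hstep; unfold fenced; exists (m, y'); board_arith.
  repeat split; try lia.
  right; split; [lia | split; [lia | reflexivity]].
Qed.

Lemma white_king_climbs w y :
  w + 3 <= y <= n -> white_move m n (fenced w y) (fenced (S w) y).
Proof.
  intros Hy; unfold fenced; left; exists (m, S w); board_arith.
  repeat split; try lia; try reflexivity; intro E; injection E; lia.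
Qed.

Lemma rook_mates_on_top_row :
  white_mates_within m n 1 (Pos (m - 1, n - 2) (Some (m - 2, 1)) (m, n)).
Proof.
  exists (Pos (m - 1, n - 2) (Some (m - 2, n)) (m, n)); split.
  { right; exists (m - 2, 1), (m - 2, n); board_arith; repeat split; lia. }
  left; split.
  { exists (m - 2, n); board_arith; split; [reflexivity | lia]. }
  intros p Hp; apply black_move_rook_inv in Hp.
  destruct Hp as [[x y] [Hon [Hadj [Hk [Hnadj Hcases]]]]]; board_arith.
  destruct Hcases as [[E _] | [_ [Hfree _]]]; [injection E |]; lia.
Qed.

Lemma rook_drives_king_to_corner :
  white_mates_within m n 2 (Pos (m - 1, n - 2) (Some (m - 1, 1)) (m - 1, n)).
Proof.
  apply white_mates_within_forced with
    (Pos (m - 1, n - 2) (Some (m - 2, 1)) (m - 1, n))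
    (Pos (m - 1, n - 2) (Some (m - 2, 1)) (m, n)).
  - right; exists (m - 1, 1), (m - 2, 1); board_arith; repeat split; lia.
  - exists (m, n); board_arith; repeat split; try lia.
    right; split; [lia | split; [lia | reflexivity]].
  - intros p Hp; apply black_move_rook_inv in Hp.
    destruct Hp as [[x y] [Hon [Hadj [Hk [Hnadj Hcases]]]]]; board_arith.
    destruct Hcases as [[E _] | [_ [Hfree ->]]]; [injection E; lia |].
    assert (x = m /\ y = n) as [-> ->] by lia; reflexivity.
  - exact rook_mates_on_top_row.
Qed.

Lemma king_takes_opposition :
  white_mates_within m n 3 (fenced (n - 3) n).
Proof.
  apply white_mates_within_forced with
    (Pos (m - 1, n - 2) (Some (m - 1, 1)) (m, n))
    (Pos (m - 1, n - 2) (Some (m - 1, 1)) (m - 1, n)).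
  - unfold fenced; left; exists (m - 1, n - 2); board_arith.
    repeat split; try lia; try reflexivity; intro E; injection E; lia.
  - exists (m - 1, n); board_arith; repeat split; try lia.
    right; split; [lia | split; [lia | reflexivity]].
  - intros p Hp; apply black_move_rook_inv in Hp.
    destruct Hp as [[x y] [Hon [Hadj [Hk [Hnadj Hcases]]]]]; board_arith.
    destruct Hcases as [[E _] | [_ [Hfree ->]]]; [injection E; lia |].
    assert (x = m - 1 /\ y = n) as [-> ->] by lia; reflexivity.
  - exact rook_drives_king_to_corner.
Qed.

Lemma fenced_mate w k :
  1 <= w -> w + 3 + 2 * k <= n ->
  white_mates_within m n (n - w) (fenced w (w + 3 + 2 * k)).
Proof.
  remember (n - w) as d eqn:Hd; revert w k Hd.
  induction d as [|d IH]; intros w k Hd Hw Hy; [lia |].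
  destruct (Nat.eq_dec (w + 3) n) as [Hend | Hclimb].
  { assert (k = 0) as -> by lia; assert (d = 2) as -> by lia.
    replace w with (n - 3) by lia; replace (n - 3 + 3 + 2 * 0) with n by lia.
    exact king_takes_opposition. }
  apply white_mates_within_step with (fenced (S w) (w + 3 + 2 * k)).
  - apply white_king_climbs; lia.
  - destruct (Nat.eq_dec (w + 3 + 2 * k) n) as [Htop | Hbelow].
    + exists (fenced (S w) (w + 2 + 2 * k)); apply black_move_fenced_intro; lia.
    + exists (fenced (S w) (w + 4 + 2 * k)); apply black_move_fenced_intro; lia.
  - intros q Hq; apply black_move_fenced in Hq; try lia.
    destruct Hq as [y' [-> [Hy' [Hup | Hdown]]]].
    + replace y' with (S w + 3 + 2 * k) by lia; apply IH; lia.
    + replace y' with (S w + 3 + 2 * (k - 1)) by lia; apply IH; lia.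
Qed.

Lemma rook_fences_last_column :
  white_move m n (Pos (m, 1) (Some (1, 1)) (m, n)) (fenced 1 n).
Proof. right; exists (1, 1), (m - 1, 1); board_arith; repeat split; lia. Qed.

End KingRookEndgame.

Theorem lemma1 (m n : nat) :
  4 <= m -> 5 <= n -> Nat.odd n = true ->
  white_mates_within m n n (Pos (m, 1) (Some (1, 1)) (m, n)).
Proof.
  intros Hm Hn Hodd; apply Nat.odd_spec in Hodd; destruct Hodd as [k Hk].
  replace n with (S (n - 1)) at 2 by lia.
  apply white_mates_within_forced with (fenced m 1 n) (fenced m 1 (n - 1)).
  - apply rook_fences_last_column; lia.
  - apply black_move_fenced_intro; lia.
  - intros q Hq; apply black_move_fenced in Hq; try lia.
    destruct Hq as [y' [-> [Hy' Hstep]]]; f_equal; lia.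
  - replace (n - 1) with (1 + 3 + 2 * (k - 2)) at 2 by lia.
    apply fenced_mate; lia.
Qed.
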